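(* Let $n\geq3$ and let $\lambda=\langle\lambda_1,\dots,\lambda_k\rangle$ be a composition of $n-1$ with $\lambda_1\geq2$ and $\lambda_k\geq2$. If $\lambda_j>\lambda_1+1$ for some $j\in\{2,\dots,k\}$, then the matrix $H_\lambda$ is not a minimal matrix representation, i.e. the $n\times(n+1)$ matrix $[0\,|\,H_\lambda]$ obtained by prepending a zero column is not a minimal matrix representation.
   Context: Definition of $H_\lambda$: partition the rows $1,\dots,n$ into consecutive blocks $R_0=\{1\},R_1,\dots,R_k$ with $|R_j|=\lambda_j$, and the columns $1,\dots,n$ into consecutive blocks $C_1,\dots,C_k,C_{k+1}=\{n\}$ with $|C_j|=\lambda_j$ for $j\le k$. $H_\lambda$ is the $n\times n$ $0/1$-matrix whose block $(R_j,C_j)$ is $I_{\lambda_j}$ for $1\le j\le k$, whose blocks $(R_i,C_j)$ with $i>j$ are zero, and whose blocks $(R_i,C_j)$ with $0\le i<j\le k+1$ are all ones if $j-i$ is odd and all zeros if $j-i$ is even. Minimal matrix representation: for $x\in\{0,1\}^n$ its column number is $(2^0,2^1,\dots,2^{n-1})x$; for an $n\times m$ $0/1$-matrix $P$ with distinct columns, $\nu(P)$ is the increasingly sorted vector of its column numbers. $P$ is a minimal matrix representation if its column numbers are strictly increasing from left to right and $\nu(P)\preceq\nu(Q)$ lexicographically for every $Q$ obtained from $P$ by complementing (exchanging $0\leftrightarrow1$) the entries of some subset of rows and then permuting rows. *)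

From mathcomp Require Import all_boot all_order all_algebra all_fingroup.
Set Implicit Arguments. Unset Strict Implicit. Unset Printing Implicit Defensive.

(* Conventions: rows/columns are 0-based ('I_n); row r (0-based) is row r+1
   of the paper.  A composition lam = [:: lam_1; ...; lam_k] is a seq nat. *)

Definition psum (lam : seq nat) (j : nat) : nat := sumn (take j lam).

(* block index of the (0-based) row r: 0 for r = 0 (R_0 = {1}), and the j in
   1..k with psum (j-1) < r <= psum j otherwise (rows 1-based r+1 in
   2 + psum(j-1) .. 1 + psum j). *)
Definition rowblk (lam : seq nat) (r : nat) : nat :=
  count (fun j => psum lam j < r) (iota 0 (size lam)).

(* block index of the (0-based) column c: the j in 1..k with
   psum (j-1) <= c < psum j, or k+1 for c = psum k (= n-1, the last column). *)
Definition colblk (lam : seq nat) (c : nat) : nat :=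
  count (fun j => psum lam j <= c) (iota 0 (size lam).+1).

Definition Hentry (lam : seq nat) (r c : nat) : bool :=
  let i := rowblk lam r in
  let j := colblk lam c in
  if i == j then r.-1 == c
  else if j < i then false
  else odd (j - i).

Definition Hmat (n : nat) (lam : seq nat) : 'M[bool]_n :=
  \matrix_(r < n, c < n) Hentry lam r c.

Definition zeroH (n : nat) (lam : seq nat) : 'M[bool]_(n, 1 + n) :=
  row_mx (const_mx false) (Hmat n lam).

Definition colnum n m (P : 'M[bool]_(n, m)) (j : 'I_m) : nat :=
  \sum_(i < n) (P i j : nat) * 2 ^ i.

Definition nu n m (P : 'M[bool]_(n, m)) : seq nat :=
  sort leq [seq colnum P j | j <- enum 'I_m].

Fixpoint lexle (s t : seq nat) : bool :=
  match s, t with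
  | [::], _ => true
  | _ :: _, [::] => false
  | x :: s', y :: t' => (x < y) || ((x == y) && lexle s' t')
  end.

Definition compl_perm n m (S : {set 'I_n}) (s : 'S_n) (P : 'M[bool]_(n, m))
  : 'M[bool]_(n, m) :=
  \matrix_(i, j) (if s i \in S then ~~ P (s i) j else P (s i) j).

Definition distinct_cols n m (P : 'M[bool]_(n, m)) : Prop :=
  forall j1 j2 : 'I_m, j1 != j2 -> exists i, P i j1 != P i j2.

Definition minimal_rep n m (P : 'M[bool]_(n, m)) : Prop :=
  [/\ distinct_cols P,
      (forall j1 j2 : 'I_m, (j1 < j2)%N -> (colnum P j1 < colnum P j2)%N) &
      forall (S : {set 'I_n}) (s : 'S_n), lexle (nu P) (nu (compl_perm S s P))].

From mathcomp Require Import all_boot all_order all_algebra all_fingroup.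
From mathcomp Require Import zify.

(* Write a = lam_1, and use 0-based rows and columns.  The first a + 1 columns
   of [0 | H_lam] are 0 and e_0 + e_m (1 <= m <= a), with column numbers
   pair_num m, and every other column has a number exceeding pair_num (a + 1).
   Now let lam_j > a + 1 and let p be the first column of the block C_j of H_lam.
   Within this block, the columns p, ..., p + a + 1 agree outside their
   identity entries; so complementing the rows where column p has a 1 and
   rotating row p + 1 to the top turns them into 0 and e_0 + e_m
   (1 <= m <= a + 1).  The resulting matrix has pair_num 0, ..., pair_num (a + 1)
   among its column numbers, hence a lexicographically smaller nu. *)

Lemma lexle_cat_gt_subset (A r u : seq nat) (b y : nat) :
  sorted leq u -> sorted ltn (rcons A b) -> {subset rcons A b <= u} -> b < y ->
  ~~ lexle (A ++ y :: r) u.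
Proof.
have head_le h u' z : sorted leq (h :: u') -> z \in h :: u' -> h <= z.
  move=> su; rewrite inE => /orP[/eqP->//|zu].
  by have /allP := order_path_min leq_trans su; apply.
elim: A u => [|x A IH] [|h u] /= su sA sub lby.
- by have := sub b (mem_head _ _).
- have hb := head_le _ _ _ su (sub b (mem_head _ _)).
  by rewrite ltnNge (leq_trans hb (ltnW lby)) /= (gtn_eqF (leq_ltn_trans hb lby)).
- by have := sub x (mem_head _ _).
- have hx := head_le _ _ _ su (sub x (mem_head _ _)).
  rewrite ltnNge hx /=; case: eqP => [exh|] //=; subst h.
  apply: IH lby; [exact: path_sorted su | exact: path_sorted sA |].
  move=> z zA; have := sub z; rewrite inE zA orbT inE => /(_ isT) /orP[/eqP ezx|//].
  have /allP/(_ _ zA) := order_path_min ltn_trans sA.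
  by rewrite ezx ltnn.
Qed.

Lemma sort_cat_le (A R : seq nat) :
  sorted leq A -> {in A & R, forall x y, x <= y} ->
  sort leq (A ++ R) = A ++ sort leq R.
Proof.
move=> sA AR; have sAR : sorted leq (A ++ sort leq R).
  case: (lastP A) sA AR => [|A' x]; first by rewrite sort_sorted //; apply: leq_total.
  move=> sA AR; rewrite cat_rcons sorted_cat_cons sA /=.
  have := sort_sorted leq_total R; case eR: (sort leq R) => [//|z r] /= ->.
  rewrite andbT AR ?mem_rcons ?mem_head // -(perm_mem (permEl (perm_sort leq R))).
  by rewrite eR mem_head.
rewrite -(sorted_sort leq_trans sAR); apply/perm_sortP.
- exact: leq_total.
- exact: leq_trans.
- exact: anti_leq.
by rewrite perm_cat2l perm_sym perm_sort.
Qed.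

Lemma lexle_sort_cat_gt_subset (A R u : seq nat) (b : nat) :
  sorted leq u -> sorted ltn (rcons A b) -> {subset rcons A b <= u} ->
  R != [::] -> {in R, forall y, b < y} ->
  ~~ lexle (sort leq (A ++ R)) u.
Proof.
move=> su sAb sub R0 bR.
have /and3P[/allrelP Ab sA _] :
    [&& allrel ltn A [:: b], pairwise ltn A & pairwise ltn [:: b]].
  by rewrite -pairwise_cat -(sorted_pairwise ltn_trans) cats1.
rewrite sort_cat_le; first last.
- move=> x y xA yR; apply: ltnW; apply: ltn_trans (bR y yR).
  by apply: Ab; rewrite ?mem_seq1.
- by apply: (sub_sorted (fun x y => @ltnW x y)); rewrite (sorted_pairwise ltn_trans).
case eR: (sort leq R) => [|y r].
  by move: R0; rewrite -size_eq0 -(size_sort leq) eR.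
apply: lexle_cat_gt_subset su sAb sub _; apply: bR.
by rewrite -(perm_mem (permEl (perm_sort leq R))) eR mem_head.
Qed.

Lemma psum0 lam : psum lam 0 = 0.
Proof. by rewrite /psum take0. Qed.

Lemma psumS lam j : psum lam j.+1 = psum lam j + nth 0 lam j.
Proof.
rewrite /psum; elim: lam j => [|x l IH] [|j] //=; first by rewrite take0 addn0.
by rewrite IH addnA.
Qed.

Lemma psum1 lam : psum lam 1 = nth 0 lam 0.
Proof. by rewrite psumS psum0. Qed.

Lemma psum_size lam : psum lam (size lam) = sumn lam.
Proof. by rewrite /psum take_size. Qed.

Lemma leq_psum lam i j : i <= j -> psum lam i <= psum lam j.
Proof.
elim: j => [|j IH]; first by rewrite leqn0 => /eqP->.
rewrite leq_eqVlt => /orP[/eqP->//|]; rewrite ltnS => /IH h.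
by rewrite psumS (leq_trans h (leq_addr _ _)).
Qed.
Arguments leq_psum lam {i j}.

Lemma ltn_psum lam i j : all (fun x => 0 < x) lam -> i < size lam -> i < j ->
  psum lam i < psum lam j.
Proof.
move=> /allP lam_pos ik ij; apply: leq_trans _ (leq_psum lam ij).
by rewrite psumS -addn1 leq_add2l lam_pos ?mem_nth.
Qed.

Lemma count_iota_threshold (P : pred nat) K t : t <= K ->
  (forall j, j < K -> P j = (j < t)) -> count P (iota 0 K) = t.
Proof.
move=> tK PE; rewrite -(subnKC tK) iotaD count_cat add0n.
rewrite (@eq_in_count _ _ predT); last first.
  by move=> j; rewrite mem_iota => /andP[_ jt]; rewrite PE ?jt // (leq_trans jt tK).
rewrite count_predT size_iota (@eq_in_count _ _ pred0) ?count_pred0 ?addn0 //.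
by move=> j; rewrite mem_iota subnKC // => /andP[tj jK]; rewrite PE // ltnNge tj.
Qed.

Lemma rowblk0 lam : rowblk lam 0 = 0.
Proof. by rewrite /rowblk (@eq_count _ _ pred0) ?count_pred0. Qed.

Lemma colblk_gt0 lam c : 0 < colblk lam c.
Proof. by rewrite /colblk /= psum0. Qed.

Lemma rowblkS lam c : c < sumn lam -> rowblk lam c.+1 = colblk lam c.
Proof.
move=> cl; rewrite /colblk /rowblk -(addn1 (size lam)) iotaD count_cat /= add0n.
by rewrite psum_size leqNgt cl /= !addn0.
Qed.

Lemma colblk_block lam j c : j < size lam -> psum lam j <= c < psum lam j.+1 ->
  colblk lam c = j.+1.
Proof.
move=> jk /andP[pc cp].
apply: count_iota_threshold => [|i _]; first by rewrite ltnS ltnW.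
case: (ltnP i j.+1) => ij.
  by apply: leq_trans (leq_psum lam _) pc; rewrite -ltnS.
by apply/negbTE; rewrite -ltnNge; apply: leq_trans cp (leq_psum lam ij).
Qed.

Lemma Hentry_diag lam r c : rowblk lam r = colblk lam c -> Hentry lam r c = (r.-1 == c).
Proof. by move=> h; rewrite /Hentry h eqxx. Qed.

Lemma Hentry_subdiag lam c : c < sumn lam -> Hentry lam c.+1 c.
Proof. by move=> cl; rewrite Hentry_diag ?rowblkS. Qed.

Lemma Hentry_eq_colblk lam r c1 c2 : colblk lam c1 = colblk lam c2 ->
  r = 0 \/ r.-1 != c1 /\ r.-1 != c2 -> Hentry lam r c1 = Hentry lam r c2.
Proof.
move=> h [->|[n1 n2]]; rewrite /Hentry h //.
  by rewrite rowblk0 eq_sym (negbTE (lt0n_neq0 (colblk_gt0 _ _))).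
by rewrite (negbTE n1) (negbTE n2).
Qed.

Lemma Hentry_last lam : all (fun x => 0 < x) lam -> Hentry lam (sumn lam) (sumn lam).
Proof.
move=> lam_pos; rewrite /Hentry -psum_size.
have -> : rowblk lam (psum lam (size lam)) = size lam.
  by apply: count_iota_threshold => // j jk; rewrite jk ltn_psum.
have -> : colblk lam (psum lam (size lam)) = (size lam).+1.
  by apply: count_iota_threshold => // j jk; rewrite jk leq_psum // -ltnS.
by rewrite (ltn_eqF (ltnSn _)) ltnNge leqnSn /= subSnn.
Qed.

Section FirstBlock.

Variable lam : seq nat.
Hypothesis lam_pos : all (fun x => 0 < x) lam.
Hypothesis size_lam : 1 < size lam.
Local Notation a := (nth 0 lam 0).

Lemma head_gt0 : 0 < a.
Proof. by apply: (allP lam_pos); rewrite mem_nth // ltnW. Qed.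

Lemma colblk_C1 c : c < a -> colblk lam c = 1.
Proof. by move=> ca; apply: (@colblk_block _ 0); rewrite ?psum0 ?psum1 //; lia. Qed.

Lemma rowblk_R1 r : 0 < r -> r <= a -> rowblk lam r = 1.
Proof.
move=> r0 ra; apply: count_iota_threshold; first by apply: leq_trans size_lam.
move=> [|j] _; first by rewrite psum0.
by apply/negbTE; rewrite -leqNgt (leq_trans ra) // -psum1 leq_psum.
Qed.

Lemma rowblk_gt_R1 r : a < r -> 1 < rowblk lam r.
Proof.
move=> ar; rewrite /rowblk -(subnKC size_lam) iotaD count_cat /= psum0 psum1 ar.
by rewrite (leq_ltn_trans _ ar) //= leq_addr.
Qed.

Lemma Hentry_top_C1 c : c < a -> Hentry lam 0 c.
Proof. by move=> ca; rewrite /Hentry rowblk0 colblk_C1. Qed.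

Lemma Hentry_R1_C1 r c : c < a -> 0 < r -> r <= a -> Hentry lam r c = (r.-1 == c).
Proof. by move=> ca r0 ra; apply: Hentry_diag; rewrite colblk_C1 ?rowblk_R1. Qed.

Lemma Hentry_below_C1 r c : c < a -> a < r -> Hentry lam r c = false.
Proof.
move=> ca ar; rewrite /Hentry colblk_C1 //; have := @rowblk_gt_R1 r ar.
by case: (rowblk lam r) => [|[|i]].
Qed.

Lemma Hentry_R1_C2 : Hentry lam 1 a.
Proof.
rewrite /Hentry.
have -> : colblk lam a = 2.
  apply: (@colblk_block _ 1); rewrite // psum1 psumS psum1.
  rewrite leqnn -{1}(addn0 (nth 0 lam 0)) ltn_add2l.
  exact: (allP lam_pos _ (mem_nth 0 size_lam)).
by rewrite rowblk_R1 ?head_gt0.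
Qed.

End FirstBlock.

Lemma Hentry_addb_block lam j r m : j < size lam -> 0 < m < nth 0 lam j ->
  Hentry lam r (psum lam j) (+) Hentry lam r (psum lam j + m) =
  (r == (psum lam j).+1) || (r == (psum lam j + m).+1).
Proof.
move=> jk /andP[m0 mL]; set p := psum lam j.
have pL : p + nth 0 lam j <= sumn lam by rewrite -psumS -psum_size leq_psum.
have cb d : d < nth 0 lam j -> colblk lam (p + d) = j.+1.
  by move=> dL; apply: colblk_block; rewrite // psumS; lia.
have cbp : colblk lam p = j.+1 by rewrite -{1}[p]addn0 cb //; lia.
have rowblk_shift d : d < nth 0 lam j -> rowblk lam (p + d).+1 = j.+1.
  by move=> dL; rewrite rowblkS ?cb //; lia.
have [->|rp] := eqVneq r p.+1.
  rewrite Hentry_subdiag; last by lia.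
  by rewrite Hentry_diag -1?[p.+1]addn0 ?rowblk_shift ?cb //=; lia.
have [->|rpm] := eqVneq r (p + m).+1.
  rewrite Hentry_subdiag; last by lia.
  by rewrite Hentry_diag ?rowblk_shift ?cbp //=; lia.
rewrite (@Hentry_eq_colblk _ _ p (p + m)) ?addbb ?cbp ?cb //.
by case: r rp rpm => [|r] rp rpm; [left | right; split; apply/eqP; lia].
Qed.

Lemma colnum_ge_exp n m (P : 'M[bool]_(n, m)) j (i : 'I_n) :
  P i j -> 2 ^ i <= colnum P j.
Proof. by move=> h; rewrite /colnum (bigD1 i) //= h mul1n leq_addr. Qed.

Lemma colnum_ge_exp2 n m (P : 'M[bool]_(n, m)) j (i1 i2 : 'I_n) : i1 != i2 ->
  P i1 j -> P i2 j -> 2 ^ i1 + 2 ^ i2 <= colnum P j.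
Proof.
move=> ne h1 h2; rewrite /colnum (bigD1 i1) //= (bigD1 i2) /=; last by rewrite eq_sym.
by rewrite h1 h2 !mul1n addnA leq_addr.
Qed.

Lemma colnum0 n m (P : 'M[bool]_(n, m)) j : (forall i, ~~ P i j) -> colnum P j = 0.
Proof. by move=> h; rewrite /colnum big1 // => i _; rewrite (negbTE (h i)). Qed.

Lemma colnum_pair n m (P : 'M[bool]_(n, m)) j (i1 i2 : 'I_n) : i1 != i2 ->
  (forall i, P i j = (i == i1) || (i == i2)) -> colnum P j = 2 ^ i1 + 2 ^ i2.
Proof.
move=> ne h; rewrite /colnum (bigD1 i1) //= (bigD1 i2) /=; last by rewrite eq_sym.
rewrite !h !eqxx orbT /= !mul1n addnA big1 ?addn0 // => i /andP[n2 n1].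
by rewrite h (negbTE n1) (negbTE n2).
Qed.

(* column number of the column e_0 + e_m, and of the zero column for m = 0 *)
Definition pair_num m := if m == 0 then 0 else 1 + 2 ^ m.

Lemma sorted_pair_num t : sorted ltn (map pair_num (iota 0 t)).
Proof.
rewrite sorted_map; apply: sub_sorted (iota_ltn_sorted 0 t) => x y /= xy.
rewrite /pair_num (gtn_eqF (leq_ltn_trans (leq0n x) xy)).
by case: eqP => // _; rewrite ltn_add2l ltn_exp2l.
Qed.

Lemma colnum_e0_plus n m (P : 'M[bool]_(n, m)) j (i : 'I_n) : 0 < i ->
  (forall i', P i' j = (val i' == 0) || (i' == i)) -> colnum P j = pair_num i.
Proof.
move=> i_gt0 h; pose i0 := Ordinal (ltn_trans i_gt0 (ltn_ord i)).
rewrite /pair_num (gtn_eqF i_gt0) (@colnum_pair _ _ P j i0 i) //.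
by rewrite -(inj_eq val_inj) /= eq_sym -lt0n.
Qed.

Definition rot_ord n k (i : 'I_n) : 'I_n :=
  Ordinal (ltn_pmod (i + k) (leq_ltn_trans (leq0n i) (ltn_ord i))).

Lemma rot_ord_inj n k : injective (@rot_ord n k).
Proof.
move=> i1 i2 /(congr1 val) /= /eqP; rewrite eqn_modDr !modn_small // => /eqP.
exact: val_inj.
Qed.

Definition rot_perm n k : 'S_n := perm (@rot_ord_inj n k).

Lemma rot_permE n k i : val (rot_perm n k i) = (i + k) %% n.
Proof. by rewrite permE. Qed.

Lemma rot_perm_eq n k (i : 'I_n) r : k <= r < n ->
  (val (rot_perm n k i) == r) = (val i == r - k).
Proof.
move=> /andP[kr rn]; have rk : r - k < n by lia.
have e : val (rot_perm n k (Ordinal rk)) = r.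
  by rewrite rot_permE /= subnK // modn_small.
by rewrite -{1}e (inj_eq val_inj) (inj_eq (@perm_inj _ _)).
Qed.

Lemma zeroHE n lam i (j : 'I_(1 + n)) :
  zeroH n lam i j = (j != 0 :> nat) && Hentry lam i j.-1.
Proof.
rewrite /zeroH mxE; case: splitP => [j1 ej|j2 ej]; rewrite /= ej mxE //.
by rewrite (ord1 j1).
Qed.

Lemma compl_permE n m S (s : 'S_n) (P : 'M[bool]_(n, m)) i j :
  compl_perm S s P i j = (s i \in S) (+) P (s i) j.
Proof. by rewrite mxE; case: (s i \in S). Qed.

Section ZeroH.

Variables (n : nat) (lam : seq nat).
Hypothesis lam_pos : all (fun x => 0 < x) lam.
Hypothesis sumn_lam : sumn lam = n.-1.
Hypothesis size_lam : 1 < size lam.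
Local Notation a := (nth 0 lam 0).
Hypothesis a_small : a.+2 < n.
Local Notation Z := (zeroH n lam).

Lemma colnum_zeroH_head c : c <= a -> colnum Z (inord c) = pair_num c.
Proof.
case: c => [|c] ca; first by apply: colnum0 => i; rewrite zeroHE inordK.
have cn : c.+1 < n by lia.
apply: (@colnum_e0_plus _ _ _ _ (Ordinal cn)) => //= i.
rewrite zeroHE inordK /=; last by lia.
rewrite -[_ == Ordinal cn]/(i == c.+1 :> nat).
have [->|i_gt0] := posnP i; first by rewrite Hentry_top_C1.
case: (leqP i a) => ia; first by rewrite Hentry_R1_C1 //=; apply/eqP/eqP; lia.
by rewrite Hentry_below_C1 //; apply/esym/eqP; lia.
Qed.

Lemma colnum_zeroH_ge_exp c : 0 < c <= n -> 2 ^ minn c n.-1 <= colnum Z (inord c).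
Proof.
move=> /andP[c0 cn]; have rn : minn c n.-1 < n by lia.
apply: (@colnum_ge_exp _ _ _ _ (Ordinal rn)).
rewrite zeroHE inordK //= -lt0n c0 /=.
case: (ltnP c n) => [cn1|nc].
  rewrite (minn_idPl _); last by lia.
  by rewrite -{1}(prednK c0) Hentry_subdiag //; lia.
have -> : c = n by lia.
by rewrite (minn_idPr _) -sumn_lam ?Hentry_last //; lia.
Qed.

Lemma colnum_zeroH_tail c : a < c <= n -> pair_num a.+1 < colnum Z (inord c).
Proof.
move=> /andP[ac cn].
have ex : 2 <= 2 ^ a.+1 by rewrite expnS; have := expn_gt0 2 a; lia.
have [{ac}->|ca] := eqVneq c a.+1.
  have r1 : 1 < n by lia.
  have ra : a.+1 < n by lia.
  apply: leq_trans (@colnum_ge_exp2 _ _ _ _ (Ordinal r1) (Ordinal ra) _ _ _).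
  - by rewrite /pair_num /= expn1 ltn_add2r.
  - by rewrite -(inj_eq val_inj) /=; have := head_gt0 lam lam_pos size_lam; lia.
  - by rewrite zeroHE inordK //= ?Hentry_R1_C2 //; lia.
  - rewrite zeroHE inordK /=; last by lia.
    by apply: Hentry_subdiag; lia.
apply: leq_trans (colnum_zeroH_ge_exp c _); last by lia.
have : 2 ^ a.+2 <= 2 ^ minn c n.-1 by rewrite leq_pexp2l //; lia.
by rewrite /pair_num /= (expnS _ a.+1); lia.
Qed.

Lemma nu_zeroH : nu Z = sort leq (map pair_num (iota 0 a.+1) ++
                                   [seq colnum Z (inord c) | c <- iota a.+1 (n - a)]).
Proof.
have an : a.+1 <= n.+1 by lia.
have -> : nu Z = sort leq [seq colnum Z (inord c) | c <- iota 0 n.+1].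
  rewrite /nu -val_enum_ord -map_comp; congr sort.
  by apply: eq_map => j /=; rewrite inord_val.
rewrite -(subnKC an) iotaD map_cat subSS; congr (sort leq (_ ++ _)).
by apply/eq_in_map => c; rewrite mem_iota /= => hc; rewrite colnum_zeroH_head.
Qed.

Section LongBlock.

Variable j : nat.
Hypothesis j_lt : j < size lam.
Hypothesis long_block : a.+1 < nth 0 lam j.
Local Notation p := (psum lam j).

Lemma pair_num_in_nu_normalized m : m <= a.+1 ->
  pair_num m \in nu (compl_perm [set r | Z r (inord p.+1)] (rot_perm n p.+1) Z).
Proof.
move=> ma; have pL : p + nth 0 lam j <= n.-1.
  by rewrite -sumn_lam -psumS -psum_size leq_psum.
set Q := compl_perm _ _ _; have pmn : (p + m).+1 < (1 + n) by lia.
suff <- : colnum Q (Ordinal pmn) = pair_num m.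
  by rewrite /nu mem_sort; apply: map_f; rewrite mem_enum.
have QE i : Q i (Ordinal pmn) =
    Hentry lam (rot_perm n p.+1 i) p (+) Hentry lam (rot_perm n p.+1 i) (p + m).
  by rewrite compl_permE inE !zeroHE inordK //; lia.
case: m ma pmn QE => [|m] ma pmn QE.
  by apply: colnum0 => i; rewrite QE addn0 addbb.
have mn : m.+1 < n by lia.
apply: (@colnum_e0_plus _ _ _ _ (Ordinal mn)) => // i.
rewrite QE Hentry_addb_block //; last by lia.
by rewrite !rot_perm_eq ?subnn ?subSS ?addKn //; lia.
Qed.

End LongBlock.

End ZeroH.

Theorem proposition6p4 (n : nat) (lam : seq nat) :
  (3 <= n)%N ->
  all (fun x => 0 < x)%N lam ->
  sumn lam = n.-1 ->
  (2 <= nth 0 lam 0)%N ->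
  (2 <= last 0 lam)%N ->
  (exists j, (1 <= j < size lam)%N /\ (nth 0 lam 0 + 1 < nth 0 lam j)%N) ->
  ~ minimal_rep (zeroH n lam).
Proof.
move=> _ lam_pos sumn_lam _ _ [j [/andP[j_gt0 j_lt] long_block]] [_ _ minimal].
set a := nth 0 lam 0 in long_block *.
have size_lam : 1 < size lam by apply: leq_ltn_trans j_lt.
have a_small : a.+2 < n.
  have : psum lam 1 + nth 0 lam j <= sumn lam.
    rewrite -psum_size (leq_trans _ (leq_psum lam j_lt)) //.
    by rewrite (psumS lam j) leq_add2r leq_psum.
  by rewrite psum1 sumn_lam; have := head_gt0 lam lam_pos size_lam; lia.
have := minimal [set r | zeroH n lam r (inord (psum lam j).+1)]
                (rot_perm n (psum lam j).+1).
apply/negP; rewrite nu_zeroH //.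
have headE : rcons (map pair_num (iota 0 a.+1)) (pair_num a.+1) =
             map pair_num (iota 0 a.+2).
  by rewrite -map_rcons -cats1 -(addn1 a.+1) iotaD.
apply: (@lexle_sort_cat_gt_subset _ _ _ (pair_num a.+1)).
- exact: sort_sorted leq_total _.
- by rewrite headE sorted_pair_num.
- move=> z; rewrite headE => /mapP[m]; rewrite mem_iota => /andP[_ ma] ->.
  by apply: pair_num_in_nu_normalized => //; lia.
- by rewrite -size_eq0 size_map size_iota; lia.
- move=> y /mapP[c]; rewrite mem_iota => /andP[ac cn] ->.
  by apply: colnum_zeroH_tail => //; lia.
Qed.
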